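(* For all positive integers $k,n$, we have $T_L(n)\ge 3^k$ if and only if $b'_3(k,2)\le n$.
   Context: $T_L(n)$ is the maximum size of a linear trifferent code of length $n$, i.e. a linear subspace $C\subseteq\mathbb{F}_3^n$ such that for any three distinct $x,y,z\in C$ there is a coordinate $i$ with $\{x_i,y_i,z_i\}=\mathbb{F}_3$. A $2$-blocking set in $\mathbb{F}_q^k$ is a set of points meeting every affine subspace (translate of a vector subspace) of dimension $k-2$. $b'_q(k,2)$ is the minimum size of a set $B\subseteq\mathbb{F}_q^k$ such that $\bigcup_{\zeta\in\mathbb{F}_q}\zeta B$ is a $2$-blocking set in $\mathbb{F}_q^k$; for $q=3$ this is the minimum $|B|$ such that $\{\vec0\}\cup B\cup -B$ is a $2$-blocking set. *)

From HB Require Import structures.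
From mathcomp Require Import all_boot all_order all_algebra.
Set Implicit Arguments. Unset Strict Implicit. Unset Printing Implicit Defensive.
Import GRing.Theory.
Local Open Scope ring_scope.

(* Vectors of F_3^n are row vectors 'rV['F_3]_n; coordinate i of x is x 0 i. *)
Notation F3 := ('F_3 : finFieldType).
Notation F3vec n := ('rV['F_3]_n).

Definition is_linear_code n (C : {set F3vec n}) : bool :=
  (0 \in C) &&
  [forall a : 'F_3, forall x in C, forall y in C, a *: x + y \in C].

Definition is_trifferent n (C : {set F3vec n}) : bool :=
  [forall x in C, forall y in C, forall z in C,
     [&& x != y, y != z & x != z] ==>
     [exists i : 'I_n, [set x 0 i; y 0 i; z 0 i] == [set: 'F_3]]].

Definition T_L (n : nat) : nat :=
  \max_(C : {set F3vec n} | is_linear_code C && is_trifferent C) #|C|.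

(* S is a 2-blocking set in F_3^k: it meets every affine subspace a + U
   with U a vector subspace of dimension k-2 (i.e. \dim U + 2 = k). *)
Definition is_2_blocking k (S : {set F3vec k}) : bool :=
  [forall a : F3vec k,
     [forall U : {set F3vec k}, (is_linear_code U &&
        (\dim (span (enum U)) + 2 == k)%N) ==>
        [exists b in S, b - a \in U]]].

(* b'_3(k,2): minimum |B| such that {0} ∪ B ∪ -B is 2-blocking.
   The default value #|F_3^k| is an upper bound for every |B|, so it does
   not affect the minimum. *)
Definition b'3_2 (k : nat) : nat :=
  \big[minn/#|[set: F3vec k]|]_(B : {set F3vec k} |
      is_2_blocking (0 |: (B :|: [set - b | b in B]))) #|B|.

From mathcomp Require Import all_boot all_order all_algebra.
From mathcomp Require Import ring.
Set Implicit Arguments. Unset Strict Implicit. Unset Printing Implicit Defensive.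
Import GRing.Theory.
Local Open Scope ring_scope.

(* A k-dimensional code of length n is {p M^T}: the codeword of p lists the values
   p·g_i on the rows g_i of some matrix M.  The codewords of p, p + u and p + v take all
   three values at i iff u·g_i ≠ 0 = (u + v)·g_i, so the code is trifferent with 3^k words
   iff for every u ≠ 0 and w ∉ {u, -u} some g_i lies on the hyperplane w^⊥ but not on u^⊥.
   A codimension-2 affine subspace is a + (f1^⊥ ∩ f2^⊥); rotating (f1, f2) into (u, w)
   with w·a = 0, a point ±g_i lies on it exactly when w·g_i = 0 and u·g_i ≠ 0, the sign
   being fixed by u·a.  So 0 and the ±g_i form a 2-blocking set; conversely, for k ≥ 2,
   testing a 2-blocking set {0} ∪ B ∪ -B against the subspaces a + (u^⊥ ∩ w^⊥) shows that
   the elements of B are such points. *)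

Lemma dim_rV (F : fieldType) n : \dim {: 'rV[F]_n} = n.
Proof. by rewrite dimvf dim_matrix mul1r. Qed.

Section Dot.
Variables (F : fieldType) (k : nat).
Implicit Types (u v x : 'rV[F]_k).

Definition dot u x : F := \sum_j u 0 j * x 0 j.

Lemma dotC u x : dot u x = dot x u.
Proof. by apply: eq_bigr => j _; rewrite mulrC. Qed.

Lemma dotDl u v x : dot (u + v) x = dot u x + dot v x.
Proof. by rewrite -big_split; apply: eq_bigr => j _; rewrite mxE mulrDl. Qed.

Lemma dotZl a u x : dot (a *: u) x = a * dot u x.
Proof. by rewrite mulr_sumr; apply: eq_bigr => j _; rewrite mxE mulrA. Qed.

Lemma dotNl u x : dot (- u) x = - dot u x.
Proof. by rewrite -scaleN1r dotZl mulN1r. Qed.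

Lemma dotBl u v x : dot (u - v) x = dot u x - dot v x.
Proof. by rewrite dotDl dotNl. Qed.

Lemma dot0l x : dot 0 x = 0.
Proof. by rewrite -(scale0r 0) dotZl mul0r. Qed.

Lemma dotNr u x : dot u (- x) = - dot u x.
Proof. by rewrite dotC dotNl dotC. Qed.

Lemma dotBr u x y : dot u (x - y) = dot u x - dot u y.
Proof. by rewrite !(dotC u) dotBl. Qed.

Lemma dot0r u : dot u 0 = 0.
Proof. by rewrite dotC dot0l. Qed.

Lemma dot_row m (M : 'M[F]_(m, k)) x i : (x *m M^T) 0 i = dot x (row i M).
Proof. by rewrite mxE; apply: eq_bigr => j _; rewrite !mxE. Qed.

Lemma sqr_add_system_eq0 (a b p q : F) : a ^+ 2 + b ^+ 2 != 0 ->
  a * p + b * q = 0 -> b * p - a * q = 0 -> p = 0 /\ q = 0.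
Proof.
move=> nz e1 e2; split; apply: (mulIf nz); rewrite mul0r.
  have -> : p * (a ^+ 2 + b ^+ 2) = a * (a * p + b * q) + b * (b * p - a * q) by ring.
  by rewrite e1 e2 !mulr0 addr0.
have -> : q * (a ^+ 2 + b ^+ 2) = b * (a * p + b * q) - a * (b * p - a * q) by ring.
by rewrite e1 e2 !mulr0 subr0.
Qed.

(* Coordinates along a basis of a complement of W give two functionals cutting out W. *)
Lemma codim2_kernel (W : {vspace 'rV[F]_k}) : (\dim W + 2 = k)%N ->
  exists f1 f2 : 'rV[F]_k, forall x, dot f1 x = 0 -> dot f2 x = 0 -> x \in W.
Proof.
move=> dimW; have dimWC : \dim W^C = 2%N by rewrite dimv_compl dim_rV -[X in (X - _)%N]dimW addKn.
pose c i x := coord (vbasis W^C) i (x - projv W x).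
have c_dot i x : c i x = dot (\row_j c i (delta_mx 0 j)) x.
  rewrite /c {1 2}[x]row_sum_delta linear_sum -sumrB linear_sum.
  by apply: eq_bigr => j _; rewrite mxE linearZ -scalerBr linearZ /= mulrC.
have i0 : (0 < \dim W^C)%N by rewrite dimWC.
have i1 : (1 < \dim W^C)%N by rewrite dimWC.
exists (\row_j c (Ordinal i0) (delta_mx 0 j)), (\row_j c (Ordinal i1) (delta_mx 0 j)).
move=> x; rewrite -!c_dot => cx0 cx1.
suff: x - projv W x = 0 by move/eqP; rewrite subr_eq0 => /eqP ->; apply: memv_proj.
rewrite (coord_vbasis (memv_projC W x)) big1 // => i _.
have [->|->] : i = Ordinal i0 \/ i = Ordinal i1.
  case: i => [[|[|m]] lti]; [left | right | exfalso]; try exact: val_inj.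
  by move: lti; rewrite dimWC.
- by rewrite -/(c _ x) cx0 scale0r.
- by rewrite -/(c _ x) cx1 scale0r.
Qed.

Lemma row_free_tr_surj m (M : 'M[F]_(m, k)) :
  row_free M -> forall y : 'rV_m, exists x : 'rV_k, x *m M^T = y.
Proof.
case/row_freeP => B MB y; exists (y *m B^T).
by rewrite -mulmxA -trmx_mul MB trmx1 mulmx1.
Qed.

Lemma dim_lker_row_free m (M : 'M[F]_(m, k)) :
  row_free M -> (\dim (lker (linfun (mulmxr M^T) : 'Hom('rV_k, 'rV_m))) + m = k)%N.
Proof.
move=> freeM; set h := linfun _.
have imh : limg h = fullv.
  apply/eqP; rewrite eqEsubv subvf /=; apply/subvP => y _.
  have [x <-] := row_free_tr_surj freeM y.
  by rewrite -[_ *m _]/(mulmxr M^T x) -lfunE memv_img ?memvf.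
have := limg_ker_dim h fullv.
by rewrite capfv imh !dim_rV.
Qed.

End Dot.

Lemma F3_cases (x : 'F_3) : [\/ x = 0, x = 1 | x = -1].
Proof.
by case: x => [[|[|[|m]]] ltx] //; [constructor 1 | constructor 2 | constructor 3];
  apply: val_inj.
Qed.

Lemma F3_sqr_add_eq0 (a b : 'F_3) : (a ^+ 2 + b ^+ 2 == 0) = (a == 0) && (b == 0).
Proof. by case: (F3_cases a) => ->; case: (F3_cases b) => ->. Qed.

Lemma F3_unit_sign (s t : 'F_3) : s != 0 -> t != 0 -> s = t \/ s = - t.
Proof.
by case: (F3_cases s) => ->; case: (F3_cases t) => -> // _ _;
  [left | right | right | left]; apply: val_inj.
Qed.

Lemma F3_set_addsub (s t : 'F_3) : t != 0 -> [set s; s + t; s - t] = [set: 'F_3].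
Proof.
move=> t0; apply/setP => x; rewrite !inE.
by case: (F3_cases s) t0 => ->; case: (F3_cases t) => -> //; case: (F3_cases x) => ->.
Qed.

Lemma F3_set0_opp (p q : 'F_3) : [set 0; p; q] = [set: 'F_3] -> p != 0 /\ q = - p.
Proof.
move/setP => full; have cover x : (x == 0) || (x == p) || (x == q).
  by have := full x; rewrite !inE.
move: (cover 1) (cover (-1)).
by case: (F3_cases p) => ->; case: (F3_cases q) => ->; rewrite ?opprK.
Qed.

Section F3Lmod.
Variable V : lmodType 'F_3.
Implicit Types v : V.

Lemma F3_scale_cases (c : 'F_3) v : [\/ c *: v = 0, c *: v = v | c *: v = - v].
Proof.
by case: (F3_cases c) => ->; [constructor 1; rewrite scale0r | constructor 2; rewrite scale1r
  | constructor 3; rewrite scaleN1r].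
Qed.

Lemma F3_addrr v : v + v = - v.
Proof. by rewrite -{1 2}[v]scale1r -scalerDl -scaleN1r; congr (_ *: _); apply: val_inj. Qed.

End F3Lmod.

Lemma F3_pair_row_free k (u w : 'rV[F3]_k) : u != 0 -> w != 0 -> w != u -> w != - u ->
  row_free (\matrix_(i < 2) [:: u; w]`_i).
Proof.
move=> u0 w0 wu wNu; apply: inj_row_free => v.
rewrite mulmx_sum_row !big_ord_recl big_ord0 !rowK /= addr0.
set a := v 0 _; set b := v 0 _ => abuw.
have b0 : b = 0.
  apply/eqP; apply: contraT => b0.
  have e : b *: w = - (a *: u) by apply/eqP; rewrite -addr_eq0 addrC abuw.
  have : w = (- (b^-1 * a)) *: u by rewrite scaleNr -scalerA -scalerN -e scalerK.
  by case: (F3_scale_cases (- (b^-1 * a)) u) => -> /eqP;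
    rewrite ?(negbTE w0) ?(negbTE wu) ?(negbTE wNu).
have a0 : a = 0.
  by move: abuw; rewrite b0 scale0r addr0 => /eqP; rewrite scaler_eq0 (negbTE u0) orbF => /eqP.
apply/rowP => i; rewrite mxE; case: i => [[|[|m]] lti] //.
- by rewrite -a0 /a; congr (v 0 _); apply: val_inj.
- by rewrite -b0 /b; congr (v 0 _); apply: val_inj.
Qed.

Section LinearCode.
Variable n : nat.
Implicit Types (C D : {set 'rV[F3]_n}) (W : {vspace 'rV[F3]_n}).

Lemma linear_code_sum C I (r : seq I) (P : pred I) (f : I -> 'rV[F3]_n) :
  is_linear_code C -> (forall i, P i -> f i \in C) -> \sum_(i <- r | P i) f i \in C.
Proof.
case/andP => C0 /forallP linC fC; apply: (big_ind (fun v => v \in C)) => // x y xC yC.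
by move: (linC 1) => /forall_inP /(_ x xC) /forall_inP /(_ y yC); rewrite scale1r.
Qed.

Lemma linear_codeZ C a x : is_linear_code C -> x \in C -> a *: x \in C.
Proof.
case/andP => C0 /forallP /(_ a) /forall_inP linC xC.
by move: (linC x xC) => /forall_inP /(_ 0 C0); rewrite addr0.
Qed.

Lemma mem_span_linear_code C x : is_linear_code C -> (x \in span (enum C)) = (x \in C).
Proof.
move=> linC; apply/idP/idP => [|xC]; last by rewrite memv_span ?mem_enum.
move/(@coord_span _ _ _ (in_tuple (enum C))) => ->.
apply: linear_code_sum => // i _; apply: linear_codeZ => //.
by rewrite -mem_enum mem_nth.
Qed.

Lemma vspace_linear_code W : is_linear_code [set x | x \in W].
Proof.
rewrite /is_linear_code inE mem0v; apply/forallP => a.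
by apply/forall_inP => x; rewrite inE => xW; apply/forall_inP => y; rewrite !inE => yW;
  rewrite memvD ?memvZ.
Qed.

Lemma span_vspace W : span (enum [set x | x \in W]) = W.
Proof.
by apply/vspaceP => x; rewrite mem_span_linear_code ?vspace_linear_code ?inE.
Qed.

Lemma trifferentS C D : D \subset C -> is_trifferent C -> is_trifferent D.
Proof.
move=> /subsetP DC triC; apply/forall_inP => x /DC xC.
apply/forall_inP => y /DC yC; apply/forall_inP => z /DC zC.
by move: triC => /forall_inP /(_ x xC) /forall_inP /(_ y yC) /forall_inP /(_ z zC).
Qed.

Lemma linear_code_image k (G : 'M[F3]_(k, n)) : is_linear_code [set p *m G | p : 'rV_k].
Proof.
apply/andP; split; first by apply/imsetP; exists 0; rewrite ?mul0mx.
apply/forallP => a; apply/forall_inP => _ /imsetP [p _ ->].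
apply/forall_inP => _ /imsetP [q _ ->].
by apply/imsetP; exists (a *: p + q); rewrite ?mulmxDl ?scalemxAl.
Qed.

End LinearCode.

Lemma is_2_blockingP k (S : {set 'rV[F3]_k}) :
  reflect (forall a (W : {vspace 'rV[F3]_k}), (\dim W + 2 = k)%N ->
             exists2 b, b \in S & b - a \in W)
          (is_2_blocking S).
Proof.
apply: (iffP forallP) => [blk a W dimW | blk a].
  move/forallP: (blk a) => /(_ [set x | x \in W]).
  rewrite vspace_linear_code span_vspace dimW eqxx /= => /existsP [b /andP [bS]].
  by rewrite inE; exists b.
apply/forallP => U; apply/implyP => /andP [linU /eqP dimU].
have [b bS] := blk a _ dimU; rewrite mem_span_linear_code // => baU.
by apply/existsP; exists b; rewrite bS.
Qed.

Lemma card_rV k : #|{: 'rV[F3]_k}| = (3 ^ k)%N.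
Proof. by rewrite card_mx card_Fp // mul1n. Qed.

Definition cone k (B : {set 'rV[F3]_k}) : {set 'rV[F3]_k} :=
  0 |: (B :|: [set - b | b in B]).

Section Cone.
Variables (k : nat) (B : {set 'rV[F3]_k}).

Lemma cone0 : 0 \in cone B.
Proof. exact: setU11. Qed.

Lemma cone_id b : b \in B -> b \in cone B.
Proof. by move=> bB; rewrite !inE bB orbT. Qed.

Lemma coneN b : b \in B -> - b \in cone B.
Proof. by move=> bB; rewrite !inE imset_f ?orbT. Qed.

End Cone.

Section Separating.
Variables k n : nat.

Definition hyperplane_separating (M : 'M[F3]_(n, k)) :=
  forall u w : 'rV_k, u != 0 -> w != u -> w != - u ->
  exists i, dot w (row i M) = 0 /\ dot u (row i M) != 0.

Lemma separating_row_free M : hyperplane_separating M -> row_free M^T.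
Proof.
move=> sepM; apply: inj_row_free => p pM0; apply/eqP; apply: contraT => p0.
have [||i [_]] := sepM p 0 p0; rewrite 1?eq_sym ?oppr_eq0 //.
by rewrite -dot_row pM0 mxE eqxx.
Qed.

Lemma separating_trifferent M :
  hyperplane_separating M -> is_trifferent [set p *m M^T | p : 'rV_k].
Proof.
move=> sepM; apply/forall_inP => _ /imsetP [p _ ->]; apply/forall_inP => _ /imsetP [q _ ->].
apply/forall_inP => _ /imsetP [r _ ->]; apply/implyP => /and3P [].
rewrite -[q](subrK p) -[r](subrK p); move: (q - p) (r - p) => u v pu uv pv.
have u0 : u != 0 by apply: contraNneq pu => ->; rewrite add0r.
have wu : v + u != u.
  by apply: contraNneq pv => /(canRL (addrK u)); rewrite subrr => ->; rewrite add0r.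
have wNu : v + u != - u.
  by apply: contraNneq uv => /(canRL (addrK u)); rewrite -opprD F3_addrr opprK => ->.
have [i [wi ui]] := sepM u (v + u) u0 wu wNu.
move: wi; rewrite dotDl => /eqP; rewrite addr_eq0 => /eqP vi.
apply/existsP; exists i; rewrite !dot_row !dotDl vi.
by rewrite ![_ + dot p _]addrC F3_set_addsub.
Qed.

Lemma trifferent_separating M : row_free M^T ->
  is_trifferent [set p *m M^T | p : 'rV_k] -> hyperplane_separating M.
Proof.
move=> /(@row_free_inj _ 1) injM triC u w u0 wu wNu; set v := w - u.
have inC p : p *m M^T \in [set p *m M^T | p : 'rV_k] by apply: imset_f.
have zu : 0 *m M^T != u *m M^T by rewrite (inj_eq injM) eq_sym.
have zv : 0 *m M^T != v *m M^T by rewrite (inj_eq injM) eq_sym subr_eq0.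
have uv : u *m M^T != v *m M^T.
  by rewrite (inj_eq injM); apply: contraNneq wNu => uv; rewrite -(subrK u w) -/v -uv F3_addrr.
move/forall_inP: triC => /(_ _ (inC 0)) /forall_inP /(_ _ (inC u)) /forall_inP /(_ _ (inC v)).
rewrite zu uv zv => /existsP [i]; rewrite mul0mx mxE !dot_row => /eqP /F3_set0_opp [ui vi].
by exists i; rewrite -(subrK u w) -/v dotDl vi addNr.
Qed.

Lemma separating_T_L M : hyperplane_separating M -> (3 ^ k <= T_L n)%N.
Proof.
move=> sepM; apply: (bigmax_sup [set p *m M^T | p : 'rV_k]).
  by rewrite linear_code_image separating_trifferent.
by rewrite card_imset ?card_rV //; exact: row_free_inj (separating_row_free sepM).
Qed.

End Separating.

Lemma separating_blocking k n (M : 'M[F3]_(n, k)) :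
  hyperplane_separating M -> is_2_blocking (cone [set row i M | i : 'I_n]).
Proof.
move=> sepM; apply/is_2_blockingP => a W /codim2_kernel [f1 [f2 kerW]].
have [aW|aNW] := boolP (a \in W); first by exists 0; rewrite ?cone0 ?sub0r ?memvN.
set al := dot f1 a; set be := dot f2 a.
have nz : al ^+ 2 + be ^+ 2 != 0.
  by rewrite F3_sqr_add_eq0; apply: contraNN aNW => /andP [/eqP ? /eqP ?]; apply: kerW.
(* Rotate (f1, f2) so that w kills a; u does not, as -1 is not a square in F_3. *)
pose u := al *: f1 + be *: f2; pose w := be *: f1 - al *: f2.
have ua : dot u a = al ^+ 2 + be ^+ 2 by rewrite dotDl !dotZl.
have ua0 : dot u a != 0 by rewrite ua.
have wa : dot w a = 0 by rewrite dotBl !dotZl mulrC subrr.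
have u0 : u != 0 by apply: contraNneq ua0 => ->; rewrite dot0l.
have wu : w != u by apply: contraNneq ua0 => <-; rewrite wa.
have wNu : w != - u by apply: contraNneq ua0 => wNu; rewrite -[u]opprK -wNu dotNl wa oppr0.
have [i [wi ui]] := sepM u w u0 wu wNu.
have [b bS [ub wb]] : exists2 b, b \in cone [set row i M | i : 'I_n] &
    dot u b = dot u a /\ dot w b = 0.
  have iM : row i M \in [set row i M | i : 'I_n] by apply: imset_f.
  have [e|e] := F3_unit_sign ui ua0.
  - by exists (row i M); rewrite ?cone_id.
  - by exists (- row i M); rewrite ?coneN // !dotNr e opprK wi oppr0.
exists b => //.
have [f1ba f2ba] : dot f1 (b - a) = 0 /\ dot f2 (b - a) = 0.
  apply: (sqr_add_system_eq0 nz).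
  - by rewrite -!dotZl -dotDl dotBr ub subrr.
  - by rewrite -!dotZl -dotBl dotBr wb wa subrr.
exact: kerW.
Qed.

Section Blocking.
Variables (k : nat) (B : {set 'rV[F3]_k}).
Hypothesis blkB : is_2_blocking (cone B).

Lemma blocking_separates u w : u != 0 -> w != 0 -> w != u -> w != - u ->
  exists2 b, b \in B & dot w b = 0 /\ dot u b != 0.
Proof.
move=> u0 w0 wu wNu; have /is_2_blockingP blk := blkB.
set M := \matrix_(i < 2) [:: u; w]`_i.
have freeM : row_free M := F3_pair_row_free u0 w0 wu wNu.
have dotM x : x *m M^T = 0 -> dot u x = 0 /\ dot w x = 0.
  by move/rowP => xM; move: (xM 0) (xM 1); rewrite !dot_row !rowK !mxE !(dotC x).
have [a aM] := row_free_tr_surj freeM (delta_mx 0 0).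
have [ua wa] : dot u a = 1 /\ dot w a = 0.
  by move/rowP: aM => aM; move: (aM 0) (aM 1); rewrite !dot_row !rowK !mxE !(dotC a).
have [b bS baW] := blk a _ (dim_lker_row_free freeM).
have [ub wb] : dot u b = 1 /\ dot w b = 0.
  move: baW; rewrite memv_ker lfunE /= => /eqP /dotM [].
  by rewrite !dotBr ua wa subr0 => /subr0_eq -> ->.
case/setU1P: bS => [b0|/setUP [bB|/imsetP [b' b'B b_b']]].
- by move: ub; rewrite b0 dot0r => /eqP; rewrite eq_sym oner_eq0.
- by exists b; rewrite ?ub ?oner_eq0.
- exists b' => //; move: ub wb; rewrite b_b' !dotNr => ub /eqP; rewrite oppr_eq0 => /eqP ->.
  by split => //; rewrite -oppr_eq0 ub oner_eq0.
Qed.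

Lemma blocking_spans u : (1 < k)%N -> u != 0 -> exists2 b, b \in B & dot u b != 0.
Proof.
move=> k2 u0; have [j uj] := rV0Pn _ u0.
have [j' j'j] : exists j', j' != j.
  by apply/card_gt0P; rewrite cardC1 card_ord -ltnS prednK // ltnW.
pose w : 'rV[F3]_k := delta_mx 0 j'.
have wj : w 0 j = 0 by rewrite mxE eqxx /= eq_sym (negbTE j'j).
have w0 : w != 0 by apply/rV0Pn; exists j'; rewrite mxE !eqxx oner_eq0.
have wu : w != u by apply: contraNneq uj => <-; rewrite wj.
have wNu : w != - u by apply: contraNneq uj => wNu; rewrite -[u]opprK -wNu mxE wj oppr0.
by have [b bB [_ ub]] := blocking_separates u0 w0 wu wNu; exists b.
Qed.

Lemma blocking_separating n : (1 < k)%N -> (#|B| <= n)%N ->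
  hyperplane_separating (\matrix_(i < n) nth 0 (enum B) i).
Proof.
move=> k2 leB u w u0 wu wNu.
have [b bB [wb ub]] : exists2 b, b \in B & dot w b = 0 /\ dot u b != 0.
  have [->|w0] := eqVneq w 0; last exact: blocking_separates.
  by have [b bB ub] := blocking_spans k2 u0; exists b; rewrite ?dot0l.
have ltb : (index b (enum B) < n)%N by rewrite (leq_trans _ leB) // cardE index_mem mem_enum.
by exists (Ordinal ltb); rewrite rowK nth_index ?mem_enum.
Qed.

End Blocking.

Lemma separating_rV1 n : (0 < n)%N -> hyperplane_separating (const_mx 1 : 'M[F3]_(n, 1)).
Proof.
move=> n0 u w u0 wu wNu; exists (Ordinal n0); rewrite row_const.
have dot1 (x : 'rV[F3]_1) : dot x (const_mx 1) = x 0 0 by rewrite /dot big_ord1 mxE mulr1.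
have eq1 (x y : 'rV[F3]_1) : x 0 0 = y 0 0 -> x = y.
  by move=> xy; apply/rowP => j; rewrite (ord1 j).
have nz1 (x : 'rV[F3]_1) : x != 0 -> x 0 0 != 0.
  by apply: contraNneq => x0; apply/eqP/eq1; rewrite x0 mxE.
rewrite !dot1 nz1 //; split => //; apply/eqP; apply: contraNT wu => w0.
have [/eq1 -> //|e] := F3_unit_sign w0 (nz1 _ u0).
by move: wNu; rewrite (@eq1 w (- u)) ?eqxx // mxE.
Qed.

Lemma linear_code_generator k n (C : {set 'rV[F3]_n}) :
  is_linear_code C -> (3 ^ k <= #|C|)%N ->
  exists2 G : 'M[F3]_(k, n), row_free G & forall p, p *m G \in C.
Proof.
move=> linC leC; pose M := \matrix_(i < #|C|) enum_val i.
have subM x : (x <= M)%MS = (x \in C).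
  apply/idP/idP => [/submxP [D ->] | xC].
    rewrite mulmx_sum_row -mem_span_linear_code //; apply: memv_suml => i _.
    by rewrite memvZ // memv_span // rowK mem_enum enum_valP.
  by rewrite -(enum_rankK_in xC xC) -rowK row_sub.
have lek : (k <= \rank M)%N.
  rewrite -(@leq_exp2l 3) //; apply: leq_trans leC _.
  have /subset_leq_card : C \subset [set p *m row_base M | p : 'rV_(\rank M)].
    apply/subsetP => x; rewrite -subM -(eq_row_base M) => /submxP [p ->].
    exact: imset_f.
  by move/leq_trans; apply; rewrite (leq_trans (leq_imset_card _ _)) // card_rV.
exists (pid_mx k *m row_base M).
  by rewrite /row_free mxrankMfree ?row_base_free // rank_pid_mx.
by move=> p; rewrite -subM mulmxA (submx_trans (submxMl _ _)) // eq_row_base.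
Qed.

Lemma T_L_witness n m : (0 < m)%N -> (m <= T_L n)%N ->
  exists2 C : {set 'rV[F3]_n}, is_linear_code C && is_trifferent C & (m <= #|C|)%N.
Proof.
move=> m0 leT.
have /exists_inP [C PC leC] :
    [exists (C : {set 'rV[F3]_n} | is_linear_code C && is_trifferent C), m <= #|C|]%N.
  apply: contraLR leT; rewrite negb_exists_in -ltnNge => /forall_inP small.
  rewrite -(prednK m0) ltnS; apply/bigmax_leqP => C PC.
  by rewrite -ltnS prednK // ltnNge small.
by exists C.
Qed.

Lemma b'3_2_le k (B : {set 'rV[F3]_k}) : is_2_blocking (cone B) -> (b'3_2 k <= #|B|)%N.
Proof.
move=> blkB; rewrite /b'3_2 -minEnat -leEnat.
exact: (Order.TotalTheory.bigmin_le_cond (P := fun B => is_2_blocking (cone B)) _ _ blkB).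
Qed.

Lemma b'3_2_witness k : exists2 B : {set 'rV[F3]_k}, is_2_blocking (cone B) & #|B| = b'3_2 k.
Proof.
have blkT : is_2_blocking (cone [set: 'rV[F3]_k]).
  by apply/is_2_blockingP => a W _; exists a; rewrite ?cone_id ?inE ?subrr ?mem0v.
have [B blkB minB] := Order.TotalTheory.eq_bigmin _ (fun B => is_2_blocking (cone B))
  (fun B => #|B|) blkT (fun B _ => subset_leq_card (subsetT B)).
by exists B; rewrite // /b'3_2 -minEnat minB.
Qed.

Theorem corollary6p3 (k n : nat) (hk : (0 < k)%N) (hn : (0 < n)%N) :
  (3 ^ k <= T_L n)%N <-> (b'3_2 k <= n)%N.
Proof.
split => [leT | leB].
- have [C /andP [linC triC] leC] := T_L_witness (expn_gt0 3 k) leT.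
  have [G freeG GC] := linear_code_generator linC leC.
  have sepG : hyperplane_separating G^T.
    apply: trifferent_separating; rewrite trmxK //.
    by apply: trifferentS triC; apply/subsetP => _ /imsetP [p _ ->].
  apply: leq_trans (b'3_2_le (separating_blocking sepG)) _.
  by rewrite (leq_trans (leq_imset_card _ _)) // card_ord.
- have [B blkB cardB] := b'3_2_witness k.
  have [M sepM] : exists M : 'M[F3]_(n, k), hyperplane_separating M.
    case: (ltngtP k 1) => [|k2|k1]; first by rewrite ltnNge hk.
    (* For k = 1 no subspace has codimension 2, so B says nothing: use the repetition code. *)
      by exists (\matrix_(i < n) nth 0 (enum B) i); apply: blocking_separating; rewrite ?cardB.
    by subst k; exists (const_mx 1); apply: separating_rV1.
  exact: separating_T_L sepM.
Qed.
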